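(* Let $x = (x_1, \ldots, x_n)$ and $y = (y_1, \ldots, y_n)$ be vectors in $\mathbb{R}^n$ with $\sum_i x_i = \sum_i y_i = 0$. Then $$\sum_{1 \leq i < j \leq n} (x_i - x_j)^2 (y_i - y_j)^2 \geq \|x\|^2 \|y\|^2,$$ where $\|\cdot\|$ is the Euclidean norm. *)

From mathcomp Require Import all_boot all_order all_algebra.
From mathcomp Require Import reals.
Set Implicit Arguments. Unset Strict Implicit. Unset Printing Implicit Defensive.

From mathcomp Require Import all_boot all_order all_algebra.
From mathcomp Require Import reals.
From mathcomp Require Import ring lra.
Import Order.TTheory GRing.Theory Num.Theory.
Local Open Scope ring_scope.

(* Expanding the square over all ordered pairs (i, j), every term that is
   linear in x_j or y_j vanishes because both vectors sum to zero, leaving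
     \sum_(i<j) (x_i - x_j)^2 (y_i - y_j)^2
       = n \sum_i x_i^2 y_i^2 + |x|^2 |y|^2 + 2 <x, y>^2,
   and the first and last terms are nonnegative. *)

Lemma sum_ord_sym_ltn (V : nmodType) (n : nat) (f : 'I_n -> 'I_n -> V) :
    (forall i j, f i j = f j i) -> (forall i, f i i = 0) ->
  \sum_(i < n) \sum_(j < n) f i j
    = (\sum_(i < n) \sum_(j < n | (i < j)%N) f i j) *+ 2.
Proof.
move=> fC f0; under eq_bigr => i _ do rewrite (bigID (fun j : 'I_n => (i < j)%N)) /=.
rewrite big_split mulr2n /=; congr (_ + _).
have drop_diag (i : 'I_n) :
    \sum_(j < n | ~~ (i < j)%N) f i j = \sum_(j < n | (j < i)%N) f i j.
  rewrite (bigD1 i) ?ltnn //= f0 add0r.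
  by apply: eq_bigl => j; rewrite -leqNgt ltn_neqAle andbC.
under eq_bigr => i _ do rewrite drop_diag.
rewrite (exchange_big_dep predT) //=.
by apply: eq_bigr => i _; apply: eq_bigr => j _; rewrite fC.
Qed.

Section SumSqrDiff.
Context {R : comPzRingType} {n : nat} {x y : 'I_n -> R}.
Hypotheses (hx : \sum_(i < n) x i = 0) (hy : \sum_(i < n) y i = 0).

Local Notation X := (\sum_(i < n) x i ^+ 2).
Local Notation Y := (\sum_(i < n) y i ^+ 2).
Local Notation P := (\sum_(i < n) x i * y i).
Local Notation A := (\sum_(i < n) x i ^+ 2 * y i ^+ 2).
Local Notation U := (\sum_(i < n) x i ^+ 2 * y i).
Local Notation W := (\sum_(i < n) x i * y i ^+ 2).

Lemma sum_sqr_diff_mul_sqr_diff_row (a b : R) :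
  \sum_(j < n) (a - x j) ^+ 2 * (b - y j) ^+ 2 =
  n%:R * (a ^+ 2 * b ^+ 2) + Y * a ^+ 2 + X * b ^+ 2 + 4 * P * (a * b)
  - 2 * W * a - 2 * U * b + A.
Proof.
rewrite (eq_bigr (fun j => a ^+ 2 * b ^+ 2 + a ^+ 2 * y j ^+ 2
    + b ^+ 2 * x j ^+ 2 + 4 * a * b * (x j * y j) - 2 * a * (x j * y j ^+ 2)
    - 2 * b * (x j ^+ 2 * y j) + x j ^+ 2 * y j ^+ 2
    - 2 * a ^+ 2 * b * y j - 2 * a * b ^+ 2 * x j)); last by move=> j _; ring.
rewrite !(big_split, sumrN) /= -!mulr_sumr sumr_const card_ord hx hy.
rewrite -mulr_natl; ring.
Qed.

Lemma sum_sqr_diff_mul_sqr_diff :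
  \sum_(i < n) \sum_(j < n) (x i - x j) ^+ 2 * (y i - y j) ^+ 2 =
  (n%:R * A + X * Y + 2 * P ^+ 2) *+ 2.
Proof.
under eq_bigr => i _ do rewrite sum_sqr_diff_mul_sqr_diff_row.
rewrite !(big_split, sumrN) /= -!mulr_sumr hx hy sumr_const card_ord.
rewrite -mulr_natl; ring.
Qed.

End SumSqrDiff.

Theorem lemma3 (R : realType) (n : nat) (x y : 'I_n -> R)
  (hx : \sum_(i < n) x i = 0) (hy : \sum_(i < n) y i = 0) :
  (\sum_(i < n) x i ^+ 2) * (\sum_(i < n) y i ^+ 2)
  <= \sum_(i < n) \sum_(j < n | (i < j)%N) (x i - x j) ^+ 2 * (y i - y j) ^+ 2.
Proof.
have := sum_sqr_diff_mul_sqr_diff hx hy.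
rewrite sum_ord_sym_ltn => [expansion | i j | i]; last 2 first.
- by rewrite -sqrrN opprB -[(y i - y j) ^+ 2]sqrrN opprB.
- by rewrite !subrr expr0n mul0r.
have diag_ge0 : 0 <= \sum_(i < n) x i ^+ 2 * y i ^+ 2.
  by apply: sumr_ge0 => i _; rewrite mulr_ge0 ?sqr_ge0.
have := mulr_ge0 (ler0n R n) diag_ge0.
have := sqr_ge0 (\sum_(i < n) x i * y i).
move: expansion; rewrite !mulr2n; lra.
Qed.
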